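(* Let $0\to\mathfrak h\xrightarrow{i}\hat{\mathfrak g}\xrightarrow{p}\mathfrak g\to0$ be an abelian extension of a difference Lie algebra $(\mathfrak g,D)$ by $(\mathfrak h,K)$, with $\hat{\mathfrak g}$ carrying the difference operator $\hat D$, and identify $\mathfrak h$ with $i(\mathfrak h)\subset\hat{\mathfrak g}$. For a section $s$ (a linear map $s:\mathfrak g\to\hat{\mathfrak g}$ with $p\circ s=\mathrm{Id}$), define $\varrho:\mathfrak g\to\mathfrak{gl}(\mathfrak h)$ by $\varrho(x)u=[s(x),u]_{\hat{\mathfrak g}}$. Then $\varrho$ is a representation of $(\mathfrak g,D)$ on $\mathfrak h$ with respect to $K$, and it does not depend on the choice of section $s$.
   Context: A difference Lie algebra $(\mathfrak g,D)$: a Lie algebra with linear $D$ such that $D[x,y]=[x,D(y)]-[y,D(x)]+[D(x),D(y)]$; a homomorphism of difference Lie algebras is a Lie algebra homomorphism intertwining the operators. An extension of $(\mathfrak g,D)$ by a difference Lie algebra $(\mathfrak h,K)$ is a short exact sequence of Lie algebras $0\to\mathfrak h\xrightarrow{i}\hat{\mathfrak g}\xrightarrow{p}\mathfrak g\to0$ where $(\hat{\mathfrak g},\hat D)$ is a difference Lie algebra and $\hat D\circ i=i\circ K$, $p\circ\hat D=D\circ p$; it is abelian if $\mathfrak h$ is an abelian Lie algebra. A representation of $(\mathfrak g,D)$ on $V$ with respect to $K:V\to V$ is a Lie algebra representation $\varrho$ with $K(\varrho(x)u)=\varrho(D(x))u+\varrho(x)K(u)+\varrho(D(x))K(u)$.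 *)

From HB Require Import structures.
From mathcomp Require Import all_boot all_algebra.
Set Implicit Arguments. Unset Strict Implicit. Unset Printing Implicit Defensive.
Import GRing.Theory.
Local Open Scope ring_scope.

Definition is_linear (F : fieldType) (U V : lmodType F) (f : U -> V) : Prop :=
  forall (a : F) (x y : U), f (a *: x + y) = a *: f x + f y.

Definition is_lie_algebra (F : fieldType) (V : lmodType F) (br : V -> V -> V) : Prop :=
  [/\ forall z, is_linear (fun x => br x z),
      forall x, is_linear (br x),
      forall x, br x x = 0 &
      forall x y z, br x (br y z) + br y (br z x) + br z (br x y) = 0].

Definition is_difference_lie (F : fieldType) (V : lmodType F)
    (br : V -> V -> V) (D : V -> V) : Prop :=
  [/\ is_lie_algebra br, is_linear D &
      forall x y, D (br x y) = br x (D y) - br y (D x) + br (D x) (D y)].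

Definition is_lie_hom (F : fieldType) (U V : lmodType F)
    (brU : U -> U -> U) (brV : V -> V -> V) (f : U -> V) : Prop :=
  is_linear f /\ forall x y, f (brU x y) = brV (f x) (f y).

Definition is_difference_extension (F : fieldType) (h gh g : lmodType F)
    (brh : h -> h -> h) (K : h -> h)
    (brgh : gh -> gh -> gh) (Dh : gh -> gh)
    (brg : g -> g -> g) (D : g -> g)
    (i : h -> gh) (p : gh -> g) : Prop :=
  [/\ is_difference_lie brh K /\ is_difference_lie brgh Dh /\ is_difference_lie brg D,
      is_lie_hom brh brgh i /\ is_lie_hom brgh brg p,
      injective i /\ (forall x : g, exists y : gh, p y = x),
      (forall y : gh, p y = 0 <-> exists u : h, y = i u) &
      (forall u, Dh (i u) = i (K u)) /\ (forall y, p (Dh y) = D (p y))].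

Definition is_abelian_extension (F : fieldType) (h gh g : lmodType F)
    (brh : h -> h -> h) (K : h -> h)
    (brgh : gh -> gh -> gh) (Dh : gh -> gh)
    (brg : g -> g -> g) (D : g -> g)
    (i : h -> gh) (p : gh -> g) : Prop :=
  is_difference_extension brh K brgh Dh brg D i p /\
  forall u v : h, brh u v = 0.

Definition is_section (F : fieldType) (gh g : lmodType F)
    (p : gh -> g) (s : g -> gh) : Prop :=
  is_linear s /\ forall x, p (s x) = x.

Definition is_difference_rep (F : fieldType) (g V : lmodType F)
    (brg : g -> g -> g) (D : g -> g) (K : V -> V) (rho : g -> V -> V) : Prop :=
  [/\ forall u, is_linear (fun x => rho x u),
      forall x, is_linear (rho x),
      forall x y u, rho (brg x y) u = rho x (rho y u) - rho y (rho x u) &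
      forall x u, K (rho x u) = rho (D x) u + rho x (K u) + rho (D x) (K u)].

(* The bracket of [gh] with the abelian ideal [i h] factors through [p]: if
   [p y = p y'] then [y - y'] lies in [i h], which brackets trivially with
   [i h].  Hence [rho x u], read off from [[s x, i u]], does not depend on the
   section, and every identity of [rho] follows from the corresponding one in
   [gh] after replacing [s [x, y]] by [[s x, s y]] and [Dh (s x)] by
   [s (D x)], which have the same image under [p]. *)

From HB Require Import structures.
From mathcomp Require Import all_boot all_algebra.
From Stdlib Require Import ClassicalEpsilon.
Set Implicit Arguments.
Unset Strict Implicit.
Local Open Scope ring_scope.
Import GRing.Theory.

Section LinearMaps.
Variables (F : fieldType) (U V : lmodType F) (f : U -> V).
Hypothesis f_linear : is_linear f.

Lemma is_linear0 : f 0 = 0.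
Proof.
have := f_linear 1 0 0; rewrite scale1r addr0 => /(congr1 (fun z => z - f 0)).
by rewrite subrr addrK scale1r => ->.
Qed.

Lemma is_linearD x y : f (x + y) = f x + f y.
Proof. by have := f_linear 1 x y; rewrite !scale1r. Qed.

Lemma is_linearN x : f (- x) = - f x.
Proof.
by apply/eqP; rewrite -addr_eq0 -is_linearD addNr is_linear0.
Qed.

Lemma is_linearB x y : f (x - y) = f x - f y.
Proof. by rewrite is_linearD is_linearN. Qed.

End LinearMaps.

Section LieAlgebra.
Variables (F : fieldType) (V : lmodType F) (br : V -> V -> V).
Hypothesis br_lie : is_lie_algebra br.

Lemma lie_anticomm x y : br x y = - br y x.
Proof.
case: br_lie => linl linr alt _.
have := alt (x + y).
rewrite (is_linearD (linl _)) (is_linearD (linr x)) (is_linearD (linr y)).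
by rewrite !alt add0r addr0 => /eqP; rewrite addr_eq0 => /eqP.
Qed.

Lemma lie_jacobi_l x y z : br (br x y) z = br x (br y z) - br y (br x z).
Proof.
case: br_lie => _ linr _ jacobi.
have := jacobi x y z.
rewrite (lie_anticomm z (br x y)) (lie_anticomm z x).
rewrite (is_linearN (linr y)) => jacobi_xyz.
by apply/eqP; rewrite eq_sym -subr_eq0 jacobi_xyz.
Qed.

End LieAlgebra.

Section InducedAction.
Variables (F : fieldType) (h gh g : lmodType F).
Variables (brh : h -> h -> h) (K : h -> h).
Variables (brgh : gh -> gh -> gh) (Dh : gh -> gh).
Variables (brg : g -> g -> g) (D : g -> g).
Variables (i : h -> gh) (p : gh -> g).

Hypotheses (brgh_lie : is_lie_algebra brgh) (brg_lie : is_lie_algebra brg).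
Hypotheses (i_hom : is_lie_hom brh brgh i) (p_hom : is_lie_hom brgh brg p).
Hypotheses (i_inj : injective i) (brh_abelian : forall u v, brh u v = 0).
Hypothesis ker_p : forall y, p y = 0 <-> exists u, y = i u.

Lemma p_i u : p (i u) = 0.
Proof. by apply/ker_p; exists u. Qed.

Lemma bracket_ker_image y u : p y = 0 -> brgh y (i u) = 0.
Proof.
by case/ker_p=> w ->; rewrite -i_hom.2 brh_abelian (is_linear0 i_hom.1).
Qed.

Lemma bracket_image_factors y y' u :
  p y = p y' -> brgh y (i u) = brgh y' (i u).
Proof.
case: brgh_lie => linl _ _ _ eq_py.
rewrite -[y](subrK y') (is_linearD (linl _)) bracket_ker_image ?add0r //.
by rewrite (is_linearB p_hom.1) eq_py subrr.
Qed.

Lemma bracket_image_in_image y u : exists w, brgh y (i u) = i w.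
Proof.
apply/ker_p; rewrite p_hom.2 p_i.
by case: brg_lie => _ linr _ _; rewrite (is_linear0 (linr _)).
Qed.

Variable s : g -> gh.
Hypothesis s_section : is_section p s.

Lemma induced_action_exists :
  exists rho : g -> h -> h, forall x u, i (rho x u) = brgh (s x) (i u).
Proof.
exists (fun x u => proj1_sig (constructive_indefinite_description _
                                (bracket_image_in_image (s x) u))).
by move=> x u; case: constructive_indefinite_description.
Qed.

Lemma induced_action_unique (s' : g -> gh) (rho rho' : g -> h -> h) :
  is_section p s' ->
  (forall x u, i (rho x u) = brgh (s x) (i u)) ->
  (forall x u, i (rho' x u) = brgh (s' x) (i u)) ->
  forall x u, rho' x u = rho x u.
Proof.
move=> [_ s'K] rhoE rho'E x u; apply: i_inj.
by rewrite rho'E rhoE; apply: bracket_image_factors; rewrite s'K s_section.2.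
Qed.

Variable rho : g -> h -> h.
Hypothesis rhoE : forall x u, i (rho x u) = brgh (s x) (i u).

Lemma induced_action_linear_l u : is_linear (fun x => rho x u).
Proof.
move=> a x y; apply: i_inj.
by rewrite i_hom.1 !rhoE s_section.1; case: brgh_lie => linl _ _ _; apply: linl.
Qed.

Lemma induced_action_linear_r x : is_linear (rho x).
Proof.
move=> a u v; apply: i_inj.
by rewrite i_hom.1 !rhoE i_hom.1; case: brgh_lie => _ linr _ _; apply: linr.
Qed.

Lemma induced_action_bracket x y u :
  rho (brg x y) u = rho x (rho y u) - rho y (rho x u).
Proof.
apply: i_inj; rewrite (is_linearB i_hom.1) !rhoE.
have -> : brgh (s (brg x y)) (i u) = brgh (brgh (s x) (s y)) (i u).
  by apply: bracket_image_factors; rewrite p_hom.2 !s_section.2.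
exact: lie_jacobi_l.
Qed.

Hypothesis Dh_bracket : forall y z,
  Dh (brgh y z) = brgh y (Dh z) - brgh z (Dh y) + brgh (Dh y) (Dh z).
Hypotheses (Dh_i : forall u, Dh (i u) = i (K u)).
Hypotheses (p_Dh : forall y, p (Dh y) = D (p y)).

Lemma induced_action_difference x u :
  K (rho x u) = rho (D x) u + rho x (K u) + rho (D x) (K u).
Proof.
have DhsE v : brgh (Dh (s x)) (i v) = brgh (s (D x)) (i v).
  by apply: bracket_image_factors; rewrite p_Dh !s_section.2.
apply: i_inj; rewrite -Dh_i rhoE Dh_bracket Dh_i !(is_linearD i_hom.1) !rhoE.
rewrite (lie_anticomm brgh_lie (i u)) !DhsE opprK.
by rewrite [brgh (s x) _ + _]addrC.
Qed.

Lemma induced_action_is_difference_rep : is_difference_rep brg D K rho.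
Proof.
split; [exact: induced_action_linear_l | exact: induced_action_linear_r |
        exact: induced_action_bracket | exact: induced_action_difference].
Qed.

End InducedAction.

Theorem proposition4p14 (F : fieldType) (h gh g : lmodType F)
    (brh : h -> h -> h) (K : h -> h)
    (brgh : gh -> gh -> gh) (Dh : gh -> gh)
    (brg : g -> g -> g) (D : g -> g)
    (i : h -> gh) (p : gh -> g) :
  is_abelian_extension brh K brgh Dh brg D i p ->
  forall s : g -> gh, is_section p s ->
    (* well-definedness: [s x, i u] lies in i(h) *)
    (exists rho : g -> h -> h, forall x u, i (rho x u) = brgh (s x) (i u)) /\
    (forall rho : g -> h -> h, (forall x u, i (rho x u) = brgh (s x) (i u)) ->
       is_difference_rep brg D K rho /\
       (* independence of the section *)
       (forall (s' : g -> gh) (rho' : g -> h -> h), is_section p s' ->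
          (forall x u, i (rho' x u) = brgh (s' x) (i u)) ->
          forall x u, rho' x u = rho x u)).
Proof.
move=> [[[_ [[brgh_lie _ Dh_bracket] [brg_lie _ _]]] [i_hom p_hom] [i_inj _] ker_p
         [Dh_i p_Dh]] brh_abelian] s s_section.
split; first exact: induced_action_exists brg_lie p_hom ker_p s.
move=> rho rhoE; split.
  exact (induced_action_is_difference_rep brgh_lie i_hom p_hom i_inj
            brh_abelian ker_p s_section rhoE Dh_bracket Dh_i p_Dh).
move=> s' rho' s'_section.
exact (induced_action_unique brgh_lie i_hom p_hom i_inj brh_abelian ker_p
          s_section s'_section rhoE).
Qed.
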